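(* The variety $\mathcal{V}_{\sigma\ell\mathbb{G}}$ is generated by $\mathbb{R}$: every $G\in\mathcal{V}_{\sigma\ell\mathbb{G}}$ is isomorphic to a subalgebra of a homomorphic image (quotient) of a power of the algebra $(\mathbb{R},0,+,-,\vee,\wedge,\bigvee^-)$, where in $\mathbb{R}$ one sets $\bigvee^-(g,f_1,f_2,\dots)=\sup_{n\ge1}\{f_n\wedge g\}$. In particular $\mathcal{V}_{\sigma\ell\mathbb{G}}$ is the class of all algebras in its language satisfying every equation true in $\mathbb{R}$.
   Context: $\mathcal{V}_{\sigma\ell\mathbb{G}}$ is the infinitary variety of algebras $(G,0,+,-,\vee,\wedge,\bigvee^-)$, $\bigvee^-$ of countably infinite arity with $\bigvee_{n\ge1}^g f_n:=\bigvee^-(g,f_1,f_2,\dots)$, satisfying the $\ell$-group axioms and (A1) $\bigvee_{n\ge1}^g f_n=\bigvee_{n\ge1}^g(f_n\wedge g)$; (A2) $\bigvee_{n\ge1}^g f_n=(f_1\wedge g)\vee\bigvee^-(g,f_2,f_3,\dots)$; (A3) $\bigvee_{n\ge1}^g(f_n\wedge h)\le h$ ($a\le b$ meaning $a\wedge b=a$). Morphisms preserve all operations. *)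

From Stdlib Require Import Reals.
Open Scope R_scope.

(** Algebras in the language (0, +, -, \/, /\, \bigvee^-) ;
    [sbig g f] stands for \bigvee^-(g, f_1, f_2, ...) with f_n := f (n-1). *)
Record slg := Slg {
  car :> Type;
  s0 : car;
  sadd : car -> car -> car;
  sopp : car -> car;
  sjoin : car -> car -> car;
  smeet : car -> car -> car;
  sbig : car -> (nat -> car) -> car
}.
Arguments s0 {s}.
Arguments sadd {s}.
Arguments sopp {s}.
Arguments sjoin {s}.
Arguments smeet {s}.
Arguments sbig {s}.

Definition sle {A : slg} (a b : A) : Prop := smeet a b = a.

Record in_variety (A : slg) : Prop := {
  ax_add_assoc : forall x y z : A, sadd x (sadd y z) = sadd (sadd x y) z;
  ax_add_comm : forall x y : A, sadd x y = sadd y x;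
  ax_add_0 : forall x : A, sadd x s0 = x;
  ax_add_opp : forall x : A, sadd x (sopp x) = s0;
  ax_join_assoc : forall x y z : A, sjoin x (sjoin y z) = sjoin (sjoin x y) z;
  ax_join_comm : forall x y : A, sjoin x y = sjoin y x;
  ax_meet_assoc : forall x y z : A, smeet x (smeet y z) = smeet (smeet x y) z;
  ax_meet_comm : forall x y : A, smeet x y = smeet y x;
  ax_absorb_jm : forall x y : A, sjoin x (smeet x y) = x;
  ax_absorb_mj : forall x y : A, smeet x (sjoin x y) = x;
  ax_add_join : forall x y z : A, sadd x (sjoin y z) = sjoin (sadd x y) (sadd x z);
  ax_add_meet : forall x y z : A, sadd x (smeet y z) = smeet (sadd x y) (sadd x z);
  ax_A1 : forall (g : A) (f : nat -> A), sbig g f = sbig g (fun n => smeet (f n) g);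
  ax_A2 : forall (g : A) (f : nat -> A),
      sbig g f = sjoin (smeet (f O) g) (sbig g (fun n => f (S n)));
  ax_A3 : forall (g h : A) (f : nat -> A), sle (sbig g (fun n => smeet (f n) h)) h
}.

Definition is_hom {A B : slg} (h : A -> B) : Prop :=
  h s0 = s0 /\
  (forall x y, h (sadd x y) = sadd (h x) (h y)) /\
  (forall x, h (sopp x) = sopp (h x)) /\
  (forall x y, h (sjoin x y) = sjoin (h x) (h y)) /\
  (forall x y, h (smeet x y) = smeet (h x) (h y)) /\
  (forall g f, h (sbig g f) = sbig (h g) (fun n => h (f n))).

Definition Rsup_set (g : R) (f : nat -> R) : R -> Prop :=
  fun x => exists n, x = Rmin (f n) g.

Lemma Rsup_set_bound (g : R) (f : nat -> R) : bound (Rsup_set g f).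
Proof. exists g; intros x [n ->]; apply Rmin_r. Qed.

Lemma Rsup_set_ne (g : R) (f : nat -> R) : exists x, Rsup_set g f x.
Proof. exists (Rmin (f O) g); exists O; reflexivity. Qed.

Definition Rbig (g : R) (f : nat -> R) : R :=
  proj1_sig (completeness (Rsup_set g f) (Rsup_set_bound g f) (Rsup_set_ne g f)).

Lemma Rbig_lub (g : R) (f : nat -> R) : is_lub (Rsup_set g f) (Rbig g f).
Proof. unfold Rbig; destruct completeness; assumption. Qed.

Definition R_alg : slg := Slg R 0 Rplus Ropp Rmax Rmin Rbig.

Definition Rpow (I : Type) : slg :=
  Slg (I -> R) (fun _ => 0)
      (fun x y i => x i + y i) (fun x i => - x i)
      (fun x y i => Rmax (x i) (y i)) (fun x y i => Rmin (x i) (y i))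
      (fun g f i => Rbig (g i) (fun n => f n i)).

Inductive term (X : Type) : Type :=
| tvar : X -> term X
| t0 : term X
| tadd : term X -> term X -> term X
| topp : term X -> term X
| tjoin : term X -> term X -> term X
| tmeet : term X -> term X -> term X
| tbig : term X -> (nat -> term X) -> term X.
Arguments tvar {X}. Arguments t0 {X}. Arguments tadd {X}. Arguments topp {X}.
Arguments tjoin {X}. Arguments tmeet {X}. Arguments tbig {X}.

Fixpoint teval {X : Type} (A : slg) (v : X -> A) (t : term X) : A :=
  match t with
  | tvar x => v x
  | t0 => s0
  | tadd s u => sadd (teval A v s) (teval A v u)
  | topp s => sopp (teval A v s)
  | tjoin s u => sjoin (teval A v s) (teval A v u)
  | tmeet s u => smeet (teval A v s) (teval A v u)
  | tbig s fs => sbig (teval A v s) (fun n => teval A v (fs n))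
  end.

Definition holds_in (A : slg) {X : Type} (s t : term X) : Prop :=
  forall v : X -> A, teval A v s = teval A v t.

From Stdlib Require Import Reals Lra Lia ZArith Cantor.
From Stdlib Require Import Classical ClassicalEpsilon.
From Stdlib Require Import FunctionalExtensionality PropExtensionality ProofIrrelevance.

(* Let I be the set of all maps G -> R and call two elements x, y of R^I equivalent when
   they agree at every h satisfying some countable set of "instances" of the homomorphism
   equations (h (a + b) = h a + h b, ..., h (\bigvee^- (g, f)) = sup_n min (h (f n)) (h g)).
   Countable sets of instances are closed under countable unions, so this is a congruence
   for all the operations, and a |-> (h |-> h a) is a homomorphism G -> R^I / ~.
   It is injective because for a <> b, say c := (a - b)^+ <> 0, and any countable set of
   instances there is a map h satisfying them with h a <> h b.  To build h, choose a
   decreasing sequence of nonzero elements c >= b_0 >= b_1 >= ... deciding, for each element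
   x mentioned by an instance and each rational r, whether x <= r c or x >= r c "locally at
   b_k" (expressed by disjointness from a positive part); each such question can be decided
   below any nonzero element, using the countable joins for the sup instances and their
   consequence, the Archimedean property, for boundedness.  Then h x is the supremum of the
   rationals eventually below x, and h c = 1.  Conversely equations true in R pass to powers,
   homomorphic images and subalgebras, which gives the equational characterisation. *)

Definition ratv (p m q : nat) : R := (INR p - INR m) / INR (S q).

Lemma INR_S_gt0 q : 0 < INR (S q).
Proof. apply lt_0_INR. lia. Qed.

Lemma ratv_le p m q p' m' q' :
  (S q' * p + S q * m' <= S q' * m + S q * p')%nat -> ratv p m q <= ratv p' m' q'.
Proof.
  intros H. apply le_INR in H. rewrite !plus_INR, !mult_INR in H.
  unfold ratv. pose proof (INR_S_gt0 q). pose proof (INR_S_gt0 q').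
  set (Q := INR (S q)) in *. set (Q' := INR (S q')) in *.
  apply (Rmult_le_reg_r (Q * Q')). nra.
  replace ((INR p - INR m) / Q * (Q * Q')) with ((INR p - INR m) * Q') by (field; lra).
  replace ((INR p' - INR m') / Q' * (Q * Q')) with ((INR p' - INR m') * Q) by (field; lra).
  nra.
Qed.

Lemma ratvD p1 m1 q1 p2 m2 q2 :
  ratv (S q2 * p1 + S q1 * p2) (S q2 * m1 + S q1 * m2) (S q1 * S q2 - 1) = ratv p1 m1 q1 + ratv p2 m2 q2.
Proof.
  unfold ratv. replace (S (S q1 * S q2 - 1)) with (S q1 * S q2)%nat by lia.
  rewrite !plus_INR, !mult_INR. pose proof (INR_S_gt0 q1). pose proof (INR_S_gt0 q2).
  field. lra.
Qed.

Lemma IZR_nat_diff (z : Z) : IZR z = INR (Z.to_nat z) - INR (Z.to_nat (- z)).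
Proof.
  destruct (Z.le_ge_cases 0 z) as [H|H].
  - replace (Z.to_nat (- z)) with 0%nat by lia. rewrite INR_IZR_INZ, Z2Nat.id by lia. simpl. lra.
  - replace (Z.to_nat z) with 0%nat by lia. rewrite (INR_IZR_INZ (Z.to_nat (- z))), Z2Nat.id by lia.
    rewrite opp_IZR. simpl. lra.
Qed.

Lemma ratv_dense a b : a < b -> exists p m q, a < ratv p m q < b.
Proof.
  intros Hab. destruct (archimed_cor1 (b - a)) as [N [HN1 HN2]]. lra.
  set (Q := INR N). assert (HQ : 0 < Q) by (apply lt_0_INR; lia).
  destruct (archimed (a * Q)) as [H1 H2].
  set (k := up (a * Q)) in *.
  exists (Z.to_nat k), (Z.to_nat (- k)), (N - 1)%nat.
  unfold ratv. rewrite <- IZR_nat_diff. replace (S (N - 1)) with N by lia. fold Q.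
  split.
  - apply (Rmult_lt_reg_r Q); auto. unfold Rdiv. rewrite Rmult_assoc, Rinv_l by lra. lra.
  - apply (Rmult_lt_reg_r Q); auto. unfold Rdiv. rewrite Rmult_assoc, Rinv_l by lra.
    rewrite Rmult_1_r.
    assert (/ Q * Q = 1) by (field; lra).
    assert (HN3 : / INR N * Q < (b - a) * Q) by (apply Rmult_lt_compat_r; auto).
    fold Q in HN3. rewrite H in HN3.
    nra.
Qed.


Section SigmaLGroup.
Variable G : slg.
Hypothesis HG : in_variety G.

Local Notation "a + b" := (@sadd G a b).
Local Notation "- a" := (@sopp G a).
Local Notation "a \v b" := (@sjoin G a b) (at level 40, left associativity).
Local Notation "a \m b" := (@smeet G a b) (at level 40, left associativity).
Local Notation "0" := (@s0 G).
Local Notation "a <= b" := (@sle G a b).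

Lemma addrA (x y z : G) : x + (y + z) = x + y + z. Proof. apply (ax_add_assoc _ HG). Qed.
Lemma addrC (x y : G) : x + y = y + x. Proof. apply (ax_add_comm _ HG). Qed.
Lemma addr0 (x : G) : x + 0 = x. Proof. apply (ax_add_0 _ HG). Qed.
Lemma add0r (x : G) : 0 + x = x. Proof. rewrite addrC; apply addr0. Qed.
Lemma addrN (x : G) : x + - x = 0. Proof. apply (ax_add_opp _ HG). Qed.
Lemma addNr (x : G) : - x + x = 0. Proof. rewrite addrC; apply addrN. Qed.
Lemma addKr (x y : G) : - x + (x + y) = y.
Proof. rewrite addrA, addNr; apply add0r. Qed.
Lemma addNKr (x y : G) : x + (- x + y) = y.
Proof. rewrite addrA, addrN; apply add0r. Qed.
Lemma addrI (x y z : G) : x + y = x + z -> y = z.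
Proof. intros H. rewrite <- (addKr x y), <- (addKr x z), H; reflexivity. Qed.
Lemma opprK (x : G) : - - x = x.
Proof. apply (addrI (- x)). rewrite addrN, addNr; reflexivity. Qed.
Lemma oppr0 : - 0 = (0:G).
Proof. rewrite <- (add0r (- 0)). apply addrN. Qed.
Lemma addrCA (a b c : G) : a + (b + c) = b + (a + c).
Proof. rewrite !addrA, (addrC a). reflexivity. Qed.
Lemma addrACA (a b c d : G) : (a + b) + (c + d) = (a + c) + (b + d).
Proof. rewrite <- !addrA. f_equal. apply addrCA. Qed.
Lemma opprD (x y : G) : - (x + y) = - x + - y.
Proof.
  apply (addrI (x + y)). rewrite addrN.
  rewrite addrACA, !addrN, addr0. reflexivity.
Qed.
Lemma oppr_unique (x y : G) : x + y = 0 -> y = - x.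
Proof. intros H. apply (addrI x). rewrite H, addrN. reflexivity. Qed.

Lemma joinA (x y z : G) : x \v (y \v z) = x \v y \v z. Proof. apply (ax_join_assoc _ HG). Qed.
Lemma joinC (x y : G) : x \v y = y \v x. Proof. apply (ax_join_comm _ HG). Qed.
Lemma meetA (x y z : G) : x \m (y \m z) = x \m y \m z. Proof. apply (ax_meet_assoc _ HG). Qed.
Lemma meetC (x y : G) : x \m y = y \m x. Proof. apply (ax_meet_comm _ HG). Qed.
Lemma joinKI (x y : G) : x \v (x \m y) = x. Proof. apply (ax_absorb_jm _ HG). Qed.
Lemma meetKU (x y : G) : x \m (x \v y) = x. Proof. apply (ax_absorb_mj _ HG). Qed.
Lemma addr_join (x y z : G) : x + (y \v z) = (x + y) \v (x + z). Proof. apply (ax_add_join _ HG). Qed.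
Lemma addr_meet (x y z : G) : x + (y \m z) = (x + y) \m (x + z). Proof. apply (ax_add_meet _ HG). Qed.
Lemma add_joinl (x y z : G) : (y \v z) + x = (y + x) \v (z + x).
Proof. rewrite !(addrC _ x). apply addr_join. Qed.
Lemma add_meetl (x y z : G) : (y \m z) + x = (y + x) \m (z + x).
Proof. rewrite !(addrC _ x). apply addr_meet. Qed.

Lemma meetxx (x : G) : x \m x = x.
Proof. rewrite <- (joinKI x x) at 2. apply meetKU. Qed.
Lemma joinxx (x : G) : x \v x = x.
Proof. rewrite <- (meetKU x x) at 2. apply joinKI. Qed.
Lemma le_refl (x : G) : x <= x. Proof. apply meetxx. Qed.
Lemma le_joinE (x y : G) : x <= y <-> x \v y = y.
Proof.
  unfold sle; split; intros H.
  - rewrite <- H, joinC, meetC. apply joinKI.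
  - rewrite <- H. apply meetKU.
Qed.
Lemma le_anti (x y : G) : x <= y -> y <= x -> x = y.
Proof. unfold sle; intros H1 H2. rewrite <- H1, meetC. exact H2. Qed.
Lemma le_trans (x y z : G) : x <= y -> y <= z -> x <= z.
Proof. unfold sle; intros H1 H2. rewrite <- H1, <- meetA, H2. reflexivity. Qed.
Lemma leIl (x y : G) : x \m y <= x.
Proof. unfold sle. rewrite (meetC x y), <- meetA, meetxx. reflexivity. Qed.
Lemma leIr (x y : G) : x \m y <= y.
Proof. rewrite meetC. apply leIl. Qed.
Lemma leUl (x y : G) : x <= x \v y.
Proof. apply meetKU. Qed.
Lemma leUr (x y : G) : y <= x \v y.
Proof. rewrite joinC. apply leUl. Qed.
Lemma lexI (x y z : G) : z <= x -> z <= y -> z <= x \m y.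
Proof. unfold sle; intros H1 H2. rewrite meetA, H1, H2. reflexivity. Qed.
Lemma leUx (x y z : G) : x <= z -> y <= z -> x \v y <= z.
Proof. rewrite !le_joinE; intros H1 H2. rewrite <- joinA, H2, H1. reflexivity. Qed.
Lemma leI2 (x x' y y' : G) : x <= x' -> y <= y' -> x \m y <= x' \m y'.
Proof.
  intros H1 H2. apply lexI.
  - eapply le_trans; [apply leIl|exact H1].
  - eapply le_trans; [apply leIr|exact H2].
Qed.
Lemma leU2 (x x' y y' : G) : x <= x' -> y <= y' -> x \v y <= x' \v y'.
Proof.
  intros H1 H2. apply leUx.
  - eapply le_trans; [exact H1|apply leUl].
  - eapply le_trans; [exact H2|apply leUr].
Qed.

Lemma lerD2r (x y z : G) : x <= y -> x + z <= y + z.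
Proof. unfold sle; intros H. rewrite <- add_meetl, H. reflexivity. Qed.
Lemma lerD2l (x y z : G) : x <= y -> z + x <= z + y.
Proof. rewrite !(addrC z). apply lerD2r. Qed.
Lemma lerD2r_cancel (x y z : G) : x + z <= y + z -> x <= y.
Proof.
  intros H. apply (lerD2r _ _ (- z)) in H. rewrite <- !addrA, addrN, !addr0 in H. exact H.
Qed.
Lemma lerD (x y x' y' : G) : x <= y -> x' <= y' -> x + x' <= y + y'.
Proof. intros H1 H2. eapply le_trans; [apply lerD2r; exact H1|apply lerD2l; exact H2]. Qed.
Lemma lerN2 (x y : G) : x <= y -> - y <= - x.
Proof.
  intros H. apply (lerD2r _ _ (- x + - y)) in H.
  rewrite addNKr in H. rewrite (addrCA y), addrN, addr0 in H. exact H.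
Qed.
Lemma lerN2_rev (x y : G) : - y <= - x -> x <= y.
Proof. intros H. apply lerN2 in H. rewrite !opprK in H. exact H. Qed.
Lemma oppr_meet (x y : G) : - (x \m y) = - x \v - y.
Proof.
  apply le_anti.
  - apply lerN2_rev. rewrite opprK. apply lexI.
    + rewrite <- (opprK x) at 2. apply lerN2, leUl.
    + rewrite <- (opprK y) at 2. apply lerN2, leUr.
  - apply leUx; apply lerN2; [apply leIl|apply leIr].
Qed.
Lemma oppr_join (x y : G) : - (x \v y) = - x \m - y.
Proof.
  rewrite <- (opprK x), <- (opprK y), <- oppr_meet, !opprK. reflexivity.
Qed.
Lemma add_meet_join (x y : G) : (x \m y) + (x \v y) = x + y.
Proof.
  apply (addrI (- (x \m y))). rewrite addKr, oppr_meet, add_joinl.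
  rewrite addKr, (addrC x y), addKr. apply joinC.
Qed.

Definition ppart (x : G) := x \v 0.
Lemma ppart_ge0 x : 0 <= ppart x. Proof. apply leUr. Qed.
Lemma le_ppart x : x <= ppart x. Proof. apply leUl. Qed.
Lemma ppart_mono x y : x <= y -> ppart x <= ppart y.
Proof. intros H. apply leU2; [exact H|apply le_refl]. Qed.
Lemma ppart_le x u : x <= u -> 0 <= u -> ppart x <= u.
Proof. apply leUx. Qed.
Lemma addr_ge0 x y : 0 <= x -> 0 <= y -> 0 <= x + y.
Proof. intros H1 H2. rewrite <- (addr0 0). apply lerD; auto. Qed.
Lemma ppartD_le x y : ppart (x + y) <= ppart x + ppart y.
Proof.
  apply ppart_le. apply lerD; apply le_ppart. apply addr_ge0; apply ppart_ge0.
Qed.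
Lemma add_ppartN x : x + ppart (- x) = ppart x.
Proof. unfold ppart. rewrite addr_join, addrN, addr0. apply joinC. Qed.
Lemma eq_of_ppart_subr_eq0 a b : ppart (a + - b) = 0 -> ppart (b + - a) = 0 -> a = b.
Proof.
  intros H1 H2. pose proof (add_ppartN (a + - b)) as E.
  rewrite H1, opprD, opprK, (addrC (- a)), H2, addr0 in E.
  apply (addrI (- b)). rewrite addNr, addrC. exact E.
Qed.
Lemma meet_ppart_ppartN x : ppart x \m ppart (- x) = 0.
Proof.
  assert (E : ppart (- x) = ppart x + - x).
  { rewrite <- (add_ppartN x), addrC, addKr. reflexivity. }
  rewrite E. rewrite <- (addr0 (ppart x)) at 1. rewrite <- addr_meet.
  assert (E2 : 0 \m - x = - ppart x).
  { unfold ppart. rewrite oppr_join, oppr0, meetC. reflexivity. }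
  rewrite E2. apply addrN.
Qed.

Lemma meet_addl_le (a b c : G) : 0 <= a -> 0 <= b -> 0 <= c ->
  (a + b) \m c <= (a \m c) + (b \m c).
Proof.
  intros Ha Hb Hc. rewrite add_meetl. apply lexI.
  - rewrite addr_meet. apply leI2.
    + apply le_refl.
    + rewrite <- (add0r c) at 1. apply lerD2r; exact Ha.
  - eapply le_trans; [apply leIr|]. rewrite <- (addr0 c) at 1. apply lerD2l.
    apply lexI; auto.
Qed.

Definition perp (a b : G) := a \m b = 0.
Lemma meet_ge0 a b : 0 <= a -> 0 <= b -> 0 <= a \m b.
Proof. intros; apply lexI; auto. Qed.
Lemma perpD b a a' : 0 <= b -> 0 <= a -> 0 <= a' -> perp b a -> perp b a' -> perp b (a + a').
Proof.
  unfold perp; intros Hb Ha Ha' H1 H2. apply le_anti.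
  - rewrite meetC. eapply le_trans; [apply meet_addl_le; auto|]. rewrite !(meetC _ b), H1, H2, addr0. apply le_refl.
  - apply meet_ge0; auto. apply addr_ge0; auto.
Qed.
Lemma perp_le b a a' : 0 <= b -> 0 <= a' -> a' <= a -> perp b a -> perp b a'.
Proof.
  unfold perp; intros Hb Ha' H H1. apply le_anti.
  - rewrite <- H1. apply leI2; auto. apply le_refl.
  - apply meet_ge0; auto.
Qed.
Lemma perpC a b : perp a b -> perp b a.
Proof. unfold perp. rewrite meetC. auto. Qed.

Fixpoint nmul (n : nat) (x : G) : G := match n with O => 0 | S n => x + nmul n x end.
Lemma nmulnD n m x : nmul (n + m) x = nmul n x + nmul m x.
Proof. induction n; simpl. rewrite add0r; auto. rewrite IHn, addrA. reflexivity. Qed.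
Lemma nmulnM n m x : nmul (n * m) x = nmul n (nmul m x).
Proof. induction n; simpl; auto. rewrite nmulnD, IHn. reflexivity. Qed.
Lemma nmulD n x y : nmul n (x + y) = nmul n x + nmul n y.
Proof. induction n; simpl. rewrite addr0; auto. rewrite IHn, addrACA. reflexivity. Qed.
Lemma nmul0 n : nmul n 0 = 0.
Proof. induction n; simpl; auto. rewrite IHn, addr0; auto. Qed.
Lemma nmulN n x : nmul n (- x) = - nmul n x.
Proof. apply oppr_unique. rewrite <- nmulD, addrN. apply nmul0. Qed.
Lemma nmul_le n x y : x <= y -> nmul n x <= nmul n y.
Proof. intros H; induction n; simpl. apply le_refl. apply lerD; auto. Qed.
Lemma nmul_ge0 n x : 0 <= x -> 0 <= nmul n x.
Proof. intros H. rewrite <- (nmul0 n). apply nmul_le, H. Qed.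
Lemma perp_nmul b a n : 0 <= b -> 0 <= a -> perp b a -> perp b (nmul n a).
Proof.
  intros Hb Ha H. induction n; simpl.
  - unfold perp. apply le_anti. apply leIr. apply meet_ge0; auto. apply le_refl.
  - apply perpD; auto. apply nmul_ge0, Ha.
Qed.
Lemma ppart_nmul_le n x : ppart (nmul n x) <= nmul n (ppart x).
Proof. apply ppart_le. apply nmul_le, le_ppart. apply nmul_ge0, ppart_ge0. Qed.

Lemma perp_ppart_nmulD b u v N M : 0 <= b -> perp b (ppart u) -> perp b (ppart v) ->
  perp b (ppart (nmul N u + nmul M v)).
Proof.
  intros Hb H1 H2. eapply perp_le; [auto|apply ppart_ge0| |].
  eapply le_trans; [apply ppartD_le|]. apply lerD; apply ppart_nmul_le.
  apply perpD; auto; try (apply nmul_ge0, ppart_ge0); apply perp_nmul; auto; apply ppart_ge0.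
Qed.

Lemma ppart_sub_perp u v : perp u v -> ppart (u + - v) = u.
Proof.
  unfold perp; intros H.
  transitivity (u + - (u \m v)).
  - rewrite oppr_meet, addr_join, addrN. unfold ppart. apply joinC.
  - rewrite H, oppr0, addr0. reflexivity.
Qed.
Lemma ppart_nmul n z : ppart (nmul n z) = nmul n (ppart z).
Proof.
  assert (Hz : z = ppart z + - ppart (- z)).
  { rewrite <- (add_ppartN z). rewrite <- addrA, addrN, addr0. reflexivity. }
  rewrite Hz at 1. rewrite nmulD, nmulN. apply ppart_sub_perp.
  apply perp_nmul; try apply nmul_ge0; try apply ppart_ge0.
  apply perpC, perp_nmul; try apply ppart_ge0. apply perpC, meet_ppart_ppartN.
Qed.
Lemma join_ppart x y : x \v y = x + ppart (y + - x).
Proof. unfold ppart. rewrite addr_join, addr0, (addrCA x y), addrN, addr0. apply joinC. Qed.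
Lemma nmul_join n x y : nmul n (x \v y) = nmul n x \v nmul n y.
Proof.
  rewrite !join_ppart, nmulD, <- ppart_nmul, nmulD, nmulN. reflexivity.
Qed.

Lemma perp_le_l b b' w : 0 <= w -> perp b w -> 0 <= b' -> b' <= b -> perp b' w.
Proof.
  intros Hw H H1 H2. apply perpC. apply perpC in H.
  apply (perp_le w b b'); auto.
Qed.

Lemma perp0 b : 0 <= b -> perp b 0.
Proof. intros Hb. unfold perp. apply le_anti. apply leIr. apply meet_ge0; auto. apply le_refl. Qed.

Lemma perp_ppartN_of_le b z : 0 <= b -> b <= ppart z -> perp b (ppart (- z)).
Proof.
  intros Hb H. apply perpC. apply (perp_le _ (ppart z)); auto. apply ppart_ge0.
  apply perpC, meet_ppart_ppartN.
Qed.
Lemma perp_ppart_of_le b z : 0 <= b -> b <= ppart (- z) -> perp b (ppart z).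
Proof.
  intros Hb H. apply perpC. apply (perp_le _ (ppart (- z))); auto. apply ppart_ge0.
  pose proof (meet_ppart_ppartN (- z)) as P. rewrite opprK in P. apply perpC, P.
Qed.

Lemma nmul_meet n x y : nmul n (x \m y) = nmul n x \m nmul n y.
Proof.
  assert (E : forall u v : G, u \m v = - (- u \v - v)).
  { intros u v. rewrite oppr_join, !opprK. reflexivity. }
  rewrite E, nmulN, nmul_join, !nmulN, <- E. reflexivity.
Qed.

Lemma le_addr x y : 0 <= y -> x <= x + y.
Proof. intros H. apply (lerD2l _ _ x) in H. rewrite addr0 in H. exact H. Qed.
Lemma ppart_join_le u v : ppart (u \v v) <= ppart u + ppart v.
Proof.
  apply ppart_le.
  - apply leUx.
    + eapply le_trans; [apply le_ppart|]. apply le_addr, ppart_ge0.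
    + eapply le_trans; [apply le_ppart|]. rewrite addrC. apply le_addr, ppart_ge0.
  - apply addr_ge0; apply ppart_ge0.
Qed.
Lemma perp_ppart_join b u v : 0 <= b -> perp b (ppart u) -> perp b (ppart v) -> perp b (ppart (u \v v)).
Proof.
  intros Hb H1 H2. apply (perp_le _ (ppart u + ppart v)); auto. apply ppart_ge0.
  apply ppart_join_le. apply perpD; auto; apply ppart_ge0.
Qed.

Lemma le_subr_of_addr (a b u : G) : a + b <= u -> a <= u + - b.
Proof. intros H. apply (lerD2r _ _ (- b)) in H. rewrite <- addrA, addrN, addr0 in H. exact H. Qed.
Lemma addr_le_of_le_subr (a b u : G) : a <= u + - b -> a + b <= u.
Proof. intros H. apply (lerD2r _ _ b) in H. rewrite <- addrA, addNr, addr0 in H. exact H. Qed.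
Definition islub (x : nat -> G) (s : G) :=
  (forall n, x n <= s) /\ (forall u, (forall n, x n <= u) -> s <= u).

Lemma sbig_ub (g : G) f n : f n \m g <= sbig g f.
Proof.
  revert f; induction n; intros f; rewrite (ax_A2 _ HG g f).
  - apply leUl.
  - eapply le_trans; [apply (IHn (fun k => f (S k)))|apply leUr].
Qed.
Lemma sbig_least (g h : G) f : (forall n, f n \m g <= h) -> sbig g f <= h.
Proof.
  intros H. rewrite (ax_A1 _ HG g f).
  assert (E : (fun n => f n \m g) = (fun n => (f n \m g) \m h)).
  { apply FunctionalExtensionality.functional_extensionality. intros n. symmetry. apply H. }
  rewrite E. apply (ax_A3 _ HG g h (fun n => f n \m g)).
Qed.
Lemma islub_sbig (g : G) f : islub (fun n => f n \m g) (sbig g f).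
Proof. split. intros n; apply (sbig_ub g f n). intros u Hu; apply (sbig_least g u f Hu). Qed.
Lemma islub_sbig_bounded (x : nat -> G) B : (forall n, x n <= B) -> islub x (sbig B x).
Proof.
  intros H. assert (E : x = fun n => x n \m B).
  { apply FunctionalExtensionality.functional_extensionality. intros n. symmetry. apply H. }
  pattern x at 1. rewrite E. apply islub_sbig.
Qed.
Lemma islub_addr x s d : islub x s -> islub (fun n => x n + d) (s + d).
Proof.
  intros [H1 H2]. split.
  - intros n. apply lerD2r, H1.
  - intros u Hu. assert (s <= u + - d).
    { apply H2. intros n. specialize (Hu n). apply (lerD2r _ _ (- d)) in Hu.
      rewrite <- addrA, addrN, addr0 in Hu. exact Hu. }
    apply (lerD2r _ _ d) in H. rewrite <- addrA, addNr, addr0 in H. exact H.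
Qed.
Lemma islub_nmul x s k : islub x s -> islub (fun n => nmul k (x n)) (nmul k s).
Proof.
  intros Hs. induction k; simpl.
  - split. intros; apply le_refl. intros u Hu. apply (Hu O).
  - destruct IHk as [I1 I2]. destruct Hs as [H1 H2]. split.
    + intros n. apply lerD; auto.
    + intros u Hu.
      assert (Hnm : forall n m, x n + nmul k (x m) <= u).
      { intros n m. eapply le_trans.
        - apply lerD. apply (leUl (x n) (x m)). apply nmul_le, (leUr (x n) (x m)).
        - change (nmul (S k) (x n \v x m) <= u). rewrite nmul_join.
          apply leUx; apply Hu. }
      assert (Hm : forall m, nmul k (x m) <= u + - s).
      { intros m. assert (s <= u + - nmul k (x m)).
        { apply H2. intros n. apply le_subr_of_addr. apply Hnm. }
        apply addr_le_of_le_subr in H. rewrite addrC in H. apply le_subr_of_addr, H. }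
      apply I2, addr_le_of_le_subr in Hm. rewrite addrC. exact Hm.
Qed.
Lemma islub_ppart x s : islub x s -> islub (fun n => ppart (x n)) (ppart s).
Proof.
  intros [H1 H2]. split.
  - intros n. apply ppart_mono, H1.
  - intros u Hu. apply ppart_le.
    + apply H2. intros n. eapply le_trans; [apply le_ppart|apply Hu].
    + eapply le_trans; [apply ppart_ge0|apply (Hu O)].
Qed.
Lemma meet_islub_le y S b T : islub y S -> (forall n, b \m y n <= T) -> b \m S <= T.
Proof.
  intros [H1 H2] H.
  assert (HS : S <= T + (b \v S) + - b).
  { apply H2. intros n.
    assert (E : y n = (b \m y n) + (b \v y n) + - b).
    { rewrite add_meet_join, (addrC b), <- addrA, addrN, addr0. reflexivity. }
    rewrite E. apply lerD2r. apply lerD. apply H. apply leU2. apply le_refl. apply H1. }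
  apply addr_le_of_le_subr in HS. rewrite addrC, <- (add_meet_join b S) in HS.
  apply lerD2r_cancel in HS. exact HS.
Qed.

Lemma archimedean (a b : G) : (forall n, nmul n b <= a) -> b <= 0.
Proof.
  (* the countable sup s of the n b satisfies s + b <= s *)
  intros H. destruct (islub_sbig_bounded (fun n => nmul n b) a H) as [H1 H2].
  set (Sb := sbig a (fun n => nmul n b)) in *.
  assert (Hs : Sb <= Sb + - b).
  { apply H2. intros n. specialize (H1 (S n)). simpl in H1.
    apply le_subr_of_addr. rewrite addrC. exact H1. }
  apply addr_le_of_le_subr in Hs. rewrite addrC in Hs. apply le_subr_of_addr in Hs. rewrite addrN in Hs.
  exact Hs.
Qed.

Lemma le0_of_perp_nmul_sub (b c x : G) : 0 <= b -> b <= c ->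
  (forall n, perp b (ppart (nmul n c + - x))) -> b <= 0.
Proof.
  intros Hb Hbc H. apply (archimedean (ppart x)). intros n.
  set (t := nmul n b + - x).
  assert (P1 : perp (nmul n b) (ppart t)).
  { apply perpC, perp_nmul; auto. apply ppart_ge0.
    apply perpC. apply (perp_le _ (ppart (nmul n c + - x))); auto. apply ppart_ge0.
    apply ppart_mono, lerD2r, nmul_le, Hbc. }
  assert (P2 : ppart t <= nmul n b + ppart (- x)).
  { apply ppart_le. apply lerD2l, le_ppart. apply addr_ge0. apply nmul_ge0, Hb. apply ppart_ge0. }
  assert (P3 : ppart t <= ppart (- x)).
  { eapply le_trans. apply (lexI _ _ (ppart t) (le_refl _) P2).
    rewrite meetC. eapply le_trans. apply meet_addl_le.
    apply nmul_ge0, Hb. apply ppart_ge0. apply ppart_ge0.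
    unfold perp in P1. rewrite P1, add0r. apply leIl. }
  assert (P4 : t <= ppart (- x)) by (eapply le_trans; [apply le_ppart|exact P3]).
  apply (lerD2r _ _ x) in P4. unfold t in P4. rewrite <- addrA, addNr, addr0 in P4.
  rewrite addrC, add_ppartN in P4. exact P4.
Qed.

Lemma perp_ppart_islub (x : nat -> G) s b Q K : islub x s -> 0 <= b ->
  (forall n, perp b (ppart (nmul Q (x n) + K))) -> perp b (ppart (nmul Q s + K)).
Proof.
  intros Hs Hb H.
  pose proof (islub_ppart _ _ (islub_addr _ _ K (islub_nmul _ _ Q Hs))) as L.
  unfold perp. apply le_anti.
  - apply (meet_islub_le _ _ b 0 L). intros n. rewrite (H n). apply le_refl.
  - apply meet_ge0; auto. apply ppart_ge0.
Qed.

Inductive instance : Type :=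
| Iadd (x y : G) | Iopp (x : G) | Ijoin (x y : G) | Imeet (x y : G) | Izero
| Ibig (g : G) (f : nat -> G).

Definition sat (h : G -> R) (i : instance) : Prop :=
  match i with
  | Iadd x y => h (sadd x y) = Rplus (h x) (h y)
  | Iopp x => h (sopp x) = Ropp (h x)
  | Ijoin x y => h (sjoin x y) = Rmax (h x) (h y)
  | Imeet x y => h (smeet x y) = Rmin (h x) (h y)
  | Izero => h s0 = R0
  | Ibig g f => h (sbig g f) = Rbig (h g) (fun n => h (f n))
  end.

(* The elements of G occurring in an instance, enumerated by nat; the value of the
   constructed map is only controlled at those elements. *)
Definition elem (i : instance) (m : nat) : G :=
  match i with
  | Iadd x y => match m with 0 => x | 1 => y | _ => sadd x y end
  | Iopp x => match m with 0 => x | 1 => sopp x | _ => s0 end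
  | Ijoin x y => match m with 0 => x | 1 => y | _ => sjoin x y end
  | Imeet x y => match m with 0 => x | 1 => y | _ => smeet x y end
  | Izero => s0
  | Ibig g f => match Cantor.of_nat m with
                | (0, _) => sbig g f
                | (1, _) => g
                | (2, n) => f n
                | (_, n) => smeet (f n) g
                end
  end.

Section UnitElement.
Variable c : G.
Hypothesis c_ge0 : 0 <= c.

Definition nonzero_below (b : G) := 0 <= b /\ b <> 0 /\ b <= c.

(* [le_on b x p m q] says that (q + 1) x <= (p - m) c "locally at b", i.e. that b is disjoint
   from the positive part of (q + 1) x - (p - m) c; [ge_on] is the reverse comparison. *)
Definition cmulz (m p : nat) := nmul m c + - nmul p c.
Definition excess (x : G) (p m q : nat) := nmul (S q) x + cmulz m p.
Definition le_on (b x : G) p m q := perp b (ppart (excess x p m q)).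
Definition ge_on (b x : G) p m q := perp b (ppart (- excess x p m q)).

Lemma le_on_le b b' x p m q : le_on b x p m q -> 0 <= b' -> b' <= b -> le_on b' x p m q.
Proof. intros; eapply perp_le_l; eauto. apply ppart_ge0. Qed.
Lemma ge_on_le b b' x p m q : ge_on b x p m q -> 0 <= b' -> b' <= b -> ge_on b' x p m q.
Proof. intros; eapply perp_le_l; eauto. apply ppart_ge0. Qed.

Lemma dense_split b w : 0 <= w -> nonzero_below b ->
  perp b w \/ (nonzero_below (b \m w) /\ b \m w <= b /\ b \m w <= w).
Proof.
  intros Hw [Hb [Hb0 Hbc]]. destruct (classic (b \m w = 0)) as [E|E].
  - left. exact E.
  - right. split; [split; [|split]|split]; auto. apply meet_ge0; auto.
    eapply le_trans; [apply leIl|exact Hbc]. apply leIl. apply leIr.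
Qed.

Definition down_closed (P : G -> Prop) := forall b b', P b -> 0 <= b' -> b' <= b -> P b'.
Definition dense (P : G -> Prop) := forall b, nonzero_below b -> exists b', nonzero_below b' /\ b' <= b /\ P b'.

Lemma down_closed_and P Q : down_closed P -> down_closed Q -> down_closed (fun b => P b /\ Q b).
Proof. intros H1 H2 b b' [? ?] ? ?. split; eauto. Qed.
Lemma dense_and P Q : down_closed Q -> dense P -> dense Q -> dense (fun b => P b /\ Q b).
Proof.
  intros H1 H2 H3 b Hb. destruct (H3 b Hb) as [b1 [Hb1 [Hle1 HQ]]].
  destruct (H2 b1 Hb1) as [b2 [Hb2 [Hle2 HP]]].
  exists b2. split; auto. split. eapply le_trans; eauto.
  split; auto. eapply H1; eauto. apply Hb2.
Qed.

Definition decides_on x p m q b := le_on b x p m q \/ ge_on b x p m q.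
Definition bounded_above_on x b := exists n, le_on b x n 0 0.
Definition bounded_below_on x b := exists n, ge_on b x 0 n 0.
Definition sbig_witness_on (i : instance) p m q b :=
  match i with
  | Ibig g f => le_on b (sbig g f) p m q \/ exists n, ge_on b (f n \m g) p m q
  | _ => True
  end.

Lemma down_closed_bounded_above_on x : down_closed (bounded_above_on x).
Proof. intros b b' [n H] ? ?. exists n; eapply le_on_le; eauto. Qed.
Lemma down_closed_bounded_below_on x : down_closed (bounded_below_on x).
Proof. intros b b' [n H] ? ?. exists n; eapply ge_on_le; eauto. Qed.
Lemma down_closed_sbig_witness_on i p m q : down_closed (sbig_witness_on i p m q).
Proof.
  intros b b' H ? ?. destruct i; simpl in *; auto.
  destruct H as [H|[n H]]; [left; eapply le_on_le|right; exists n; eapply ge_on_le]; eauto.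
Qed.

Lemma dense_decides_on x p m q : dense (decides_on x p m q).
Proof.
  intros b Hb. destruct (dense_split b (ppart (excess x p m q)) (ppart_ge0 _) Hb) as [H|[H1 [H2 H3]]].
  - exists b. split; auto. split. apply le_refl. left; exact H.
  - exists (b \m ppart (excess x p m q)). split; auto. split; auto. right.
    apply perp_ppartN_of_le; auto. apply H1.
Qed.

Lemma excess_nN x n : - excess x n 0 0 = nmul n c + - x.
Proof. unfold excess, cmulz. simpl. rewrite addr0, add0r, opprD, opprK, addrC. reflexivity. Qed.
Lemma excess_0n x n : excess x 0 n 0 = nmul n c + - - x.
Proof. unfold excess, cmulz. simpl. rewrite addr0, oppr0, addr0, opprK, addrC. reflexivity. Qed.

Lemma dense_bounded_above_on x : dense (bounded_above_on x).
Proof.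
  intros b Hb.
  destruct (classic (exists n, ~ perp b (ppart (- excess x n 0 0)))) as [[n Hn]|Hn].
  - destruct (dense_split b _ (ppart_ge0 (- excess x n 0 0)) Hb) as [H|[H1 [H2 H3]]]. contradiction.
    exists (b \m ppart (- excess x n 0 0)). split; auto. split; auto.
    exists n. apply perp_ppart_of_le; auto. apply H1.
  - exfalso. destruct Hb as [Hb [Hb0 Hbc]]. apply Hb0. apply le_anti; auto.
    apply (le0_of_perp_nmul_sub b c x Hb Hbc). intros n. rewrite <- excess_nN.
    apply NNPP. intros C. apply Hn. exists n. exact C.
Qed.
Lemma dense_bounded_below_on x : dense (bounded_below_on x).
Proof.
  intros b Hb.
  destruct (classic (exists n, ~ perp b (ppart (excess x 0 n 0)))) as [[n Hn]|Hn].
  - destruct (dense_split b _ (ppart_ge0 (excess x 0 n 0)) Hb) as [H|[H1 [H2 H3]]]. contradiction.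
    exists (b \m ppart (excess x 0 n 0)). split; auto. split; auto.
    exists n. apply perp_ppartN_of_le; auto. apply H1.
  - exfalso. destruct Hb as [Hb [Hb0 Hbc]]. apply Hb0. apply le_anti; auto.
    apply (le0_of_perp_nmul_sub b c (- x) Hb Hbc). intros n. rewrite <- excess_0n.
    apply NNPP. intros C. apply Hn. exists n. exact C.
Qed.

Lemma dense_sbig_witness_on i p m q : dense (sbig_witness_on i p m q).
Proof.
  intros b Hb. destruct i; try (exists b; split; auto; split; [apply le_refl|exact I]).
  simpl.
  destruct (classic (le_on b (sbig g f) p m q)) as [H|H].
  - exists b; split; auto; split; [apply le_refl|left; exact H].
  - assert (Hn : exists n, ~ perp b (ppart (excess (f n \m g) p m q))).
    { apply NNPP. intros C. apply H. unfold le_on, excess.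
      apply (perp_ppart_islub (fun n => f n \m g)). apply islub_sbig. apply Hb.
      intros n. apply NNPP. intros C2. apply C. exists n. exact C2. }
    destruct Hn as [n Hn].
    destruct (dense_split b _ (ppart_ge0 (excess (f n \m g) p m q)) Hb) as [H0|[H1 [H2 H3]]]. contradiction.
    exists (b \m ppart (excess (f n \m g) p m q)). split; auto. split; auto.
    right. exists n. apply perp_ppartN_of_le; auto. apply H1.
Qed.

Lemma nmul_cmulz n m p : nmul n (cmulz m p) = cmulz (n * m) (n * p).
Proof. unfold cmulz. rewrite nmulD, nmulN, !nmulnM. reflexivity. Qed.
Lemma cmulzD m p m' p' : cmulz m p + cmulz m' p' = cmulz (m + m') (p + p').
Proof. unfold cmulz. rewrite addrACA, <- opprD, !nmulnD. reflexivity. Qed.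
Lemma cmulzN m p : - cmulz m p = cmulz p m.
Proof. unfold cmulz. rewrite opprD, opprK, addrC. reflexivity. Qed.
Lemma excessN x p m q : - excess x p m q = - nmul (S q) x + cmulz p m.
Proof. unfold excess. rewrite opprD, cmulzN. reflexivity. Qed.

Lemma cmulz_perp_le b A B : nonzero_below b -> perp b (ppart (cmulz A B)) -> (A <= B)%nat.
Proof.
  intros [Hb [Hb0 Hbc]] H. destruct (Compare_dec.le_lt_dec A B) as [|HBA]; [assumption|].
  exfalso. apply Hb0. apply le_anti; [|exact Hb].
  assert (E : cmulz A B = nmul (A - B) c).
  { unfold cmulz. replace A with ((A - B) + B)%nat at 1 by lia.
    rewrite nmulnD, <- addrA, addrN, addr0. reflexivity. }
  assert (Hle : b <= ppart (nmul (A - B) c)).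
  { eapply le_trans; [exact Hbc|]. eapply le_trans; [|apply le_ppart].
    replace (A - B)%nat with (1 + (A - B - 1))%nat by lia. rewrite nmulnD. simpl.
    rewrite addr0. apply le_addr, nmul_ge0, c_ge0. }
  rewrite E in H. unfold perp in H. rewrite <- H. apply lexI; [apply le_refl|exact Hle].
Qed.

Lemma ge_on_le_on_nat b x p m q p' m' q' : nonzero_below b -> ge_on b x p m q -> le_on b x p' m' q' ->
  (S q' * p + S q * m' <= S q' * m + S q * p')%nat.
Proof.
  intros Hb HU HL. apply (cmulz_perp_le b _ _ Hb).
  pose proof (perp_ppart_nmulD b _ _ (S q') (S q) (proj1 Hb) HU HL) as P.
  assert (E : nmul (S q') (- excess x p m q) + nmul (S q) (excess x p' m' q')
              = cmulz (S q' * p + S q * m') (S q' * m + S q * p')).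
  { rewrite excessN. unfold excess. rewrite !nmulD, !nmul_cmulz, nmulN, <- !nmulnM.
    rewrite addrACA, (Nat.mul_comm (S q) (S q')), addNr, add0r, cmulzD. reflexivity. }
  rewrite E in P. exact P.
Qed.

Lemma excessD x y p1 m1 q1 p2 m2 q2 :
  nmul (S q2) (excess x p1 m1 q1) + nmul (S q1) (excess y p2 m2 q2) =
  excess (x + y) (S q2 * p1 + S q1 * p2) (S q2 * m1 + S q1 * m2) (S q1 * S q2 - 1).
Proof.
  unfold excess. replace (S (S q1 * S q2 - 1)) with (S q1 * S q2)%nat by lia.
  rewrite !nmulD, !nmul_cmulz, <- !nmulnM, addrACA, cmulzD, (Nat.mul_comm (S q2) (S q1)). reflexivity.
Qed.
Lemma le_onD b x y p1 m1 q1 p2 m2 q2 : 0 <= b -> le_on b x p1 m1 q1 -> le_on b y p2 m2 q2 ->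
  le_on b (x + y) (S q2 * p1 + S q1 * p2) (S q2 * m1 + S q1 * m2) (S q1 * S q2 - 1).
Proof. intros Hb H1 H2. unfold le_on. rewrite <- excessD. apply perp_ppart_nmulD; auto. Qed.
Lemma ge_onD b x y p1 m1 q1 p2 m2 q2 : 0 <= b -> ge_on b x p1 m1 q1 -> ge_on b y p2 m2 q2 ->
  ge_on b (x + y) (S q2 * p1 + S q1 * p2) (S q2 * m1 + S q1 * m2) (S q1 * S q2 - 1).
Proof.
  intros Hb H1 H2. unfold ge_on. rewrite <- excessD, opprD, <- !nmulN. apply perp_ppart_nmulD; auto.
Qed.
Lemma le_on_join b x y p m q : 0 <= b -> le_on b x p m q -> le_on b y p m q -> le_on b (x \v y) p m q.
Proof.
  intros Hb H1 H2. unfold le_on, excess in *. rewrite nmul_join, add_joinl. apply perp_ppart_join; auto.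
Qed.
Lemma ge_on_meet b x y p m q : 0 <= b -> ge_on b x p m q -> ge_on b y p m q -> ge_on b (x \m y) p m q.
Proof.
  intros Hb H1 H2. unfold ge_on, excess in *. rewrite nmul_meet, add_meetl, oppr_meet. apply perp_ppart_join; auto.
Qed.
Lemma ge_on_mono b x y p m q : 0 <= b -> x <= y -> ge_on b x p m q -> ge_on b y p m q.
Proof.
  intros Hb Hxy H. unfold ge_on in *. apply (perp_le _ (ppart (- excess x p m q))); auto. apply ppart_ge0.
  apply ppart_mono, lerN2. unfold excess. apply lerD2r, nmul_le, Hxy.
Qed.
Lemma excess_c : excess c 1 0 0 = 0.
Proof. unfold excess, cmulz. simpl. rewrite add0r, addrN. reflexivity. Qed.
Lemma le_on_c b : 0 <= b -> le_on b c 1 0 0.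
Proof.
  intros Hb. unfold le_on. rewrite excess_c. unfold ppart. rewrite joinxx. apply perp0, Hb.
Qed.
Lemma ge_on_c b : 0 <= b -> ge_on b c 1 0 0.
Proof.
  intros Hb. unfold ge_on. rewrite excess_c, oppr0. unfold ppart. rewrite joinxx. apply perp0, Hb.
Qed.

Section GenericChain.
Variable insts : nat -> instance.
Hypothesis c_neq0 : c <> 0.

(* Requirement r, for r encoding (j, i, p, m, q): the i-th element of the j-th instance is
   compared on b with the rational (p - m)/(q + 1) and bounded on both sides, and if that
   instance is a countable sup, its comparison is witnessed by one of its terms. *)
Definition requirement (r : nat) (b : G) : Prop :=
  match Cantor.of_nat r with
  | (j, r1) => match Cantor.of_nat r1 with
    | (i, r2) => match Cantor.of_nat r2 with
      | (p, r3) => match Cantor.of_nat r3 with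
        | (m, q) =>
          decides_on (elem (insts j) i) p m q b /\ (bounded_above_on (elem (insts j) i) b /\
          (bounded_below_on (elem (insts j) i) b /\ sbig_witness_on (insts j) p m q b))
        end end end end.

Lemma dense_requirement r : dense (requirement r).
Proof.
  unfold requirement. destruct (Cantor.of_nat r) as [j r1]. destruct (Cantor.of_nat r1) as [i r2].
  destruct (Cantor.of_nat r2) as [p r3]. destruct (Cantor.of_nat r3) as [m q].
  repeat first
    [ apply dense_and | apply down_closed_and
    | apply down_closed_bounded_above_on | apply down_closed_bounded_below_on
    | apply down_closed_sbig_witness_on | apply dense_decides_on
    | apply dense_bounded_above_on | apply dense_bounded_below_on | apply dense_sbig_witness_on ].
Qed.

Lemma refine_ex r b : exists b', nonzero_below b -> nonzero_below b' /\ b' <= b /\ requirement r b'.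
Proof.
  destruct (classic (nonzero_below b)) as [H|H].
  - destruct (dense_requirement r b H) as [b' Hb']. exists b'; auto.
  - exists b. intros; contradiction.
Qed.
Definition refine r b := proj1_sig (constructive_indefinite_description _ (refine_ex r b)).
Lemma refine_spec r b :
  nonzero_below b -> nonzero_below (refine r b) /\ refine r b <= b /\ requirement r (refine r b).
Proof. unfold refine. destruct constructive_indefinite_description as [b' H]. simpl. auto. Qed.

Fixpoint chain (k : nat) : G := match k with O => c | S k => refine k (chain k) end.
Lemma chain_nonzero_below k : nonzero_below (chain k).
Proof.
  induction k; simpl.
  - split; [|split]; auto. apply le_refl.
  - apply refine_spec, IHk.
Qed.
Lemma chain_le k k' : (k <= k')%nat -> chain k' <= chain k.
Proof.
  induction 1. apply le_refl. eapply le_trans; [|exact IHle]. simpl. apply refine_spec, chain_nonzero_below.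
Qed.
Lemma chain_requirement k : requirement k (chain (S k)).
Proof. simpl. apply refine_spec, chain_nonzero_below. Qed.
Lemma chain_ge0 k : 0 <= chain k. Proof. apply chain_nonzero_below. Qed.

Definition ev_le x p m q := exists k, le_on (chain k) x p m q.
Definition ev_ge x p m q := exists k, ge_on (chain k) x p m q.
Definition settled x := (forall p m q, ev_le x p m q \/ ev_ge x p m q) /\
  (exists n, ev_le x n 0 0) /\ (exists n, ev_ge x 0 n 0).

Lemma requirement_met j i p m q : exists k,
  decides_on (elem (insts j) i) p m q (chain k) /\ bounded_above_on (elem (insts j) i) (chain k) /\
  bounded_below_on (elem (insts j) i) (chain k) /\ sbig_witness_on (insts j) p m q (chain k).
Proof.
  set (r := Cantor.to_nat (j, Cantor.to_nat (i, Cantor.to_nat (p, Cantor.to_nat (m, q))))).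
  exists (S r). pose proof (chain_requirement r) as H. unfold requirement in H. unfold r in H at 1.
  rewrite !Cantor.cancel_of_to in H. exact H.
Qed.

Lemma elem_settled j i : settled (elem (insts j) i).
Proof.
  split; [|split].
  - intros p m q. destruct (requirement_met j i p m q) as [k [[H|H] _]]; [left|right]; exists k; exact H.
  - destruct (requirement_met j i 0 0 0) as [k [_ [[n H] _]]]. exists n, k. exact H.
  - destruct (requirement_met j i 0 0 0) as [k [_ [_ [[n H] _]]]]. exists n, k. exact H.
Qed.

Lemma sbig_settled j g f : insts j = Ibig g f -> forall p m q,
  ev_le (sbig g f) p m q \/ exists n, ev_ge (f n \m g) p m q.
Proof.
  intros E p m q. destruct (requirement_met j 0 p m q) as [k [_ [_ [_ H]]]]. rewrite E in H. simpl in H.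
  destruct H as [H|[n H]]; [left; exists k|right; exists n, k]; exact H.
Qed.

Lemma le_on_chain_mono k k' x p m q : (k <= k')%nat -> le_on (chain k) x p m q -> le_on (chain k') x p m q.
Proof. intros H1 H2. eapply le_on_le; eauto. apply chain_ge0. apply chain_le, H1. Qed.
Lemma ge_on_chain_mono k k' x p m q : (k <= k')%nat -> ge_on (chain k) x p m q -> ge_on (chain k') x p m q.
Proof. intros H1 H2. eapply ge_on_le; eauto. apply chain_ge0. apply chain_le, H1. Qed.

Local Open Scope R_scope.

Lemma ratv_ge_le x p m q p' m' q' : ev_ge x p m q -> ev_le x p' m' q' -> ratv p m q <= ratv p' m' q'.
Proof.
  intros [k1 H1] [k2 H2]. apply ratv_le.
  apply (ge_on_le_on_nat (chain (max k1 k2)) x); auto. apply chain_nonzero_below.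
  eapply ge_on_chain_mono; [|exact H1]; lia.
  eapply le_on_chain_mono; [|exact H2]; lia.
Qed.

Definition lower_rats x : R -> Prop := fun r => exists p m q, r = ratv p m q /\ ev_ge x p m q.

(* The value at x is the supremum of the rationals lying eventually below x along the chain;
   the junk value 0 only occurs for elements that are not settled. *)
Definition hchain (x : G) : R :=
  match excluded_middle_informative (bound (lower_rats x) /\ exists r, lower_rats x r) with
  | left H => proj1_sig (completeness _ (proj1 H) (proj2 H))
  | right _ => R0
  end.

Lemma hchain_lub x : settled x -> is_lub (lower_rats x) (hchain x).
Proof.
  intros [Hd [[n Hn] [n' Hn']]]. unfold hchain.
  destruct excluded_middle_informative as [H|H].
  - destruct completeness as [l Hl]. simpl. exact Hl.
  - exfalso. apply H. split.
    + exists (ratv n 0 0). intros r [p [m [q [-> Hr]]]]. eapply ratv_ge_le; eauto.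
    + exists (ratv 0 n' 0). exists 0%nat, n', 0%nat. split; auto.
Qed.

Lemma ratv_le_hchain x p m q : settled x -> ev_ge x p m q -> ratv p m q <= hchain x.
Proof. intros Hd H. apply (proj1 (hchain_lub x Hd)). exists p, m, q. auto. Qed.
Lemma hchain_le_ratv x p m q : settled x -> ev_le x p m q -> hchain x <= ratv p m q.
Proof.
  intros Hd H. apply (proj2 (hchain_lub x Hd)). intros r [p' [m' [q' [-> Hr]]]].
  eapply ratv_ge_le; eauto.
Qed.
Lemma ev_ge_of_lt x p m q : settled x -> ratv p m q < hchain x -> ev_ge x p m q.
Proof.
  intros Hd H. destruct (proj1 Hd p m q) as [HL|HU]; auto.
  apply hchain_le_ratv in HL; auto. lra.
Qed.
Lemma ev_le_of_gt x p m q : settled x -> hchain x < ratv p m q -> ev_le x p m q.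
Proof.
  intros Hd H. destruct (proj1 Hd p m q) as [HL|HU]; auto.
  apply ratv_le_hchain in HU; auto. lra.
Qed.

Lemma hchain_le x y : settled x -> settled y -> sle x y -> hchain x <= hchain y.
Proof.
  intros Hx Hy Hxy. apply (proj2 (hchain_lub x Hx)). intros r [p [m [q [-> [k Hr]]]]].
  apply ratv_le_hchain; auto. exists k. eapply ge_on_mono; eauto. apply chain_ge0.
Qed.

Lemma hchainD x y : settled x -> settled y -> settled (sadd x y) -> hchain (sadd x y) = hchain x + hchain y.
Proof.
  intros Hx Hy Hxy. apply Rle_antisym.
  - destruct (Rle_lt_dec (hchain (sadd x y)) (hchain x + hchain y)) as [|Hlt]; auto. exfalso.
    set (d := hchain (sadd x y) - (hchain x + hchain y)).
    destruct (ratv_dense (hchain x) (hchain x + d / 2)) as [p1 [m1 [q1 [A1 A2]]]]. unfold d; lra.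
    destruct (ratv_dense (hchain y) (hchain y + d / 2)) as [p2 [m2 [q2 [B1 B2]]]]. unfold d; lra.
    destruct (ev_le_of_gt x p1 m1 q1 Hx A1) as [k1 K1]. destruct (ev_le_of_gt y p2 m2 q2 Hy B1) as [k2 K2].
    assert (ev_le (sadd x y) (S q2 * p1 + S q1 * p2) (S q2 * m1 + S q1 * m2) (S q1 * S q2 - 1)).
    { exists (max k1 k2). apply le_onD. apply chain_ge0.
      eapply le_on_chain_mono; [|exact K1]; lia. eapply le_on_chain_mono; [|exact K2]; lia. }
    apply hchain_le_ratv in H; auto. rewrite ratvD in H. unfold d in *. lra.
  - destruct (Rle_lt_dec (hchain x + hchain y) (hchain (sadd x y))) as [|Hlt]; auto. exfalso.
    set (d := (hchain x + hchain y) - hchain (sadd x y)).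
    destruct (ratv_dense (hchain x - d / 2) (hchain x)) as [p1 [m1 [q1 [A1 A2]]]]. unfold d; lra.
    destruct (ratv_dense (hchain y - d / 2) (hchain y)) as [p2 [m2 [q2 [B1 B2]]]]. unfold d; lra.
    destruct (ev_ge_of_lt x p1 m1 q1 Hx A2) as [k1 K1]. destruct (ev_ge_of_lt y p2 m2 q2 Hy B2) as [k2 K2].
    assert (ev_ge (sadd x y) (S q2 * p1 + S q1 * p2) (S q2 * m1 + S q1 * m2) (S q1 * S q2 - 1)).
    { exists (max k1 k2). apply ge_onD. apply chain_ge0.
      eapply ge_on_chain_mono; [|exact K1]; lia. eapply ge_on_chain_mono; [|exact K2]; lia. }
    apply ratv_le_hchain in H; auto. rewrite ratvD in H. unfold d in *. lra.
Qed.

Lemma hchain_join x y : settled x -> settled y -> settled (x \v y) -> hchain (x \v y) = Rmax (hchain x) (hchain y).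
Proof.
  intros Hx Hy Hxy. apply Rle_antisym.
  - destruct (Rle_lt_dec (hchain (x \v y)) (Rmax (hchain x) (hchain y))) as [|Hlt]; auto. exfalso.
    destruct (ratv_dense _ _ Hlt) as [p [m [q [A1 A2]]]].
    destruct (ev_le_of_gt x p m q Hx) as [k1 K1]. pose proof (Rmax_l (hchain x) (hchain y)). lra.
    destruct (ev_le_of_gt y p m q Hy) as [k2 K2]. pose proof (Rmax_r (hchain x) (hchain y)). lra.
    assert (ev_le (x \v y) p m q).
    { exists (max k1 k2). apply le_on_join. apply chain_ge0.
      eapply le_on_chain_mono; [|exact K1]; lia. eapply le_on_chain_mono; [|exact K2]; lia. }
    apply hchain_le_ratv in H; auto. lra.
  - apply Rmax_lub; apply hchain_le; auto. apply leUl. apply leUr.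
Qed.

Lemma hchain_meet x y : settled x -> settled y -> settled (x \m y) -> hchain (x \m y) = Rmin (hchain x) (hchain y).
Proof.
  intros Hx Hy Hxy. apply Rle_antisym.
  - apply Rmin_glb; apply hchain_le; auto. apply leIl. apply leIr.
  - destruct (Rle_lt_dec (Rmin (hchain x) (hchain y)) (hchain (x \m y))) as [|Hlt]; auto. exfalso.
    destruct (ratv_dense _ _ Hlt) as [p [m [q [A1 A2]]]].
    destruct (ev_ge_of_lt x p m q Hx) as [k1 K1]. pose proof (Rmin_l (hchain x) (hchain y)). lra.
    destruct (ev_ge_of_lt y p m q Hy) as [k2 K2]. pose proof (Rmin_r (hchain x) (hchain y)). lra.
    assert (ev_ge (x \m y) p m q).
    { exists (max k1 k2). apply ge_on_meet. apply chain_ge0.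
      eapply ge_on_chain_mono; [|exact K1]; lia. eapply ge_on_chain_mono; [|exact K2]; lia. }
    apply ratv_le_hchain in H; auto. lra.
Qed.

Lemma hchain_c : settled c -> hchain c = 1.
Proof.
  intros Hd. apply Rle_antisym.
  - replace 1 with (ratv 1 0 0) by (unfold ratv; simpl; field).
    apply hchain_le_ratv; auto. exists 0%nat. apply le_on_c, chain_ge0.
  - replace 1 with (ratv 1 0 0) by (unfold ratv; simpl; field).
    apply ratv_le_hchain; auto. exists 0%nat. apply ge_on_c, chain_ge0.
Qed.

Lemma is_lub_unique (E : R -> Prop) a b : is_lub E a -> is_lub E b -> a = b.
Proof. intros [H1 H2] [H3 H4]. apply Rle_antisym; auto. Qed.

Lemma hchain_sbig j g f : insts j = Ibig g f -> settled (sbig g f) -> settled g ->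
  (forall n, settled (f n)) -> (forall n, settled (f n \m g)) ->
  hchain (sbig g f) = Rbig (hchain g) (fun n => hchain (f n)).
Proof.
  intros E Hs Hg Hf Hfg. apply (is_lub_unique (Rsup_set (hchain g) (fun n => hchain (f n)))); [|apply Rbig_lub].
  split.
  - intros r [n ->]. rewrite <- hchain_meet; auto. apply hchain_le; auto. apply sbig_ub.
  - intros u Hu. destruct (Rle_lt_dec (hchain (sbig g f)) u) as [|Hlt]; auto. exfalso.
    destruct (ratv_dense _ _ Hlt) as [p [m [q [A1 A2]]]].
    destruct (sbig_settled j g f E p m q) as [H|[n H]].
    + apply hchain_le_ratv in H; auto. lra.
    + apply ratv_le_hchain in H; auto. rewrite hchain_meet in H; auto.
      assert (Rmin (hchain (f n)) (hchain g) <= u) by (apply Hu; exists n; reflexivity). lra.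
Qed.

Lemma hchain0 : settled s0 -> hchain s0 = 0.
Proof.
  intros H0. pose proof (hchainD s0 s0 H0 H0) as E. rewrite addr0 in E. specialize (E H0). lra.
Qed.

Lemma settled_elem_Ibig j g f : insts j = Ibig g f ->
  settled (sbig g f) /\ settled g /\ (forall n, settled (f n)) /\ (forall n, settled (f n \m g)).
Proof.
  intros E. pose proof (elem_settled j) as D. rewrite E in D.
  assert (Dk : forall k n, settled (elem (Ibig g f) (Cantor.to_nat (k, n))))
    by (intros k n; apply D).
  unfold elem in Dk. setoid_rewrite Cantor.cancel_of_to in Dk.
  exact (conj (Dk 0%nat 0%nat) (conj (Dk 1%nat 0%nat) (conj (Dk 2%nat) (Dk 3%nat)))).
Qed.

Lemma hchain_sat j : sat hchain (insts j).
Proof.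
  pose proof (elem_settled j) as D.
  destruct (insts j) eqn:E; simpl in D |- *;
    try (pose proof (D 0%nat) as D0; pose proof (D 1%nat) as D1; pose proof (D 2%nat) as D2;
         simpl in D0, D1, D2).
  - apply hchainD; auto.
  - pose proof (hchainD x (sopp x) D0 D1) as H. rewrite addrN in H.
    specialize (H D2). rewrite (hchain0 D2) in H. lra.
  - apply hchain_join; auto.
  - apply hchain_meet; auto.
  - apply hchain0, D0.
  - destruct (settled_elem_Ibig j g f E) as [Hs [Hg [Hf Hfg]]].
    apply (hchain_sbig j); auto.
Qed.

End GenericChain.

End UnitElement.

(* For the map h built from c := (a - b)^+, the four leading instances force
   h c = max (h a - h b) 0, whereas h c = 1. *)
Definition sep_insts (a b : G) (insts : nat -> instance) (n : nat) : instance :=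
  match n with
  | O => Iadd a (- b)
  | 1 => Iadd b (- b)
  | 2 => Izero
  | 3 => Ijoin (a + - b) 0
  | S (S (S (S n))) => insts n
  end.

Lemma exists_sat_sep_pos (a b : G) (insts : nat -> instance) : ppart (a + - b) <> 0 ->
  exists h : G -> R, (forall n, sat h (insts n)) /\ h a <> h b.
Proof.
  intros Hnz. set (c := ppart (a + - b)). assert (c_ge0 : 0 <= c) by apply ppart_ge0.
  pose proof (hchain_sat c c_ge0 (sep_insts a b insts) Hnz) as Hsat.
  exists (hchain c (sep_insts a b insts)).
  split; [intros n; exact (Hsat (S (S (S (S n)))))|].
  pose proof (Hsat 0%nat) as Hab. pose proof (Hsat 1%nat) as Hbb.
  pose proof (Hsat 2%nat) as H0. pose proof (Hsat 3%nat) as Hc.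
  simpl in Hab, Hbb, H0, Hc. rewrite addrN, H0 in Hbb.
  pose proof (elem_settled c c_ge0 (sep_insts a b insts) Hnz 3 2) as Dc. simpl in Dc.
  fold (ppart (a + - b)) in Hc, Dc. fold c in Hc, Dc.
  rewrite (hchain_c c c_ge0 _ Hnz Dc), H0, Hab in Hc.
  intros E. rewrite E in Hc. unfold Rmax in Hc. destruct Rle_dec; lra.
Qed.

Lemma exists_sat_sep (a b : G) (insts : nat -> instance) : a <> b ->
  exists h : G -> R, (forall n, sat h (insts n)) /\ h a <> h b.
Proof.
  intros Hab. destruct (classic (ppart (a + - b) = 0)) as [H1|H1].
  - destruct (classic (ppart (b + - a) = 0)) as [H2|H2].
    + exfalso. exact (Hab (eq_of_ppart_subr_eq0 a b H1 H2)).
    + destruct (exists_sat_sep_pos b a insts H2) as [h [Hs Hh]]. exists h. auto.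
  - apply exists_sat_sep_pos; auto.
Qed.

End SigmaLGroup.

Arguments Iadd {G}. Arguments Iopp {G}. Arguments Ijoin {G}. Arguments Imeet {G}.
Arguments Izero {G}. Arguments Ibig {G}. Arguments sat {G}.

Definition merge_insts {G : slg} (ks : nat -> nat -> instance G) (n : nat) : instance G :=
  let (i, k) := Cantor.of_nat n in ks i k.
Lemma sat_merge_insts {G : slg} (h : G -> R) ks :
  (forall n, sat h (merge_insts ks n)) -> forall i k, sat h (ks i k).
Proof.
  intros H i k. specialize (H (Cantor.to_nat (i, k))). unfold merge_insts in H.
  rewrite Cantor.cancel_of_to in H. exact H.
Qed.
Definition merge2_insts {G : slg} (k1 k2 : nat -> instance G) : nat -> instance G :=
  merge_insts (fun i => match i with O => k1 | _ => k2 end).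
Lemma sat_merge2_insts {G : slg} (h : G -> R) k1 k2 :
  (forall n, sat h (merge2_insts k1 k2 n)) -> (forall n, sat h (k1 n)) /\ (forall n, sat h (k2 n)).
Proof.
  intros H. pose proof (sat_merge_insts h _ H) as H'. split; intros n; [apply (H' 0%nat)|apply (H' 1%nat)].
Qed.

Section Quotient.
Variable G : slg.
Definition real_map := G -> R.

Definition ceq (x y : real_map -> R) : Prop :=
  exists insts : nat -> instance G, forall h : real_map, (forall n, sat h (insts n)) -> x h = y h.

Lemma ceq_refl x : ceq x x.
Proof. exists (fun _ => Izero). auto. Qed.
Lemma ceq_sym x y : ceq x y -> ceq y x.
Proof. intros [k H]. exists k. intros h Hh. symmetry. auto. Qed.
Lemma ceq_trans x y z : ceq x y -> ceq y z -> ceq x z.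
Proof.
  intros [k1 H1] [k2 H2]. exists (merge2_insts k1 k2). intros h Hh.
  apply sat_merge2_insts in Hh. destruct Hh. rewrite H1, H2; auto.
Qed.
Lemma ceq_op2 (op : R -> R -> R) x x' y y' : ceq x x' -> ceq y y' ->
  ceq (fun h => op (x h) (y h)) (fun h => op (x' h) (y' h)).
Proof.
  intros [k1 H1] [k2 H2]. exists (merge2_insts k1 k2). intros h Hh.
  apply sat_merge2_insts in Hh. destruct Hh. rewrite H1, H2; auto.
Qed.
Lemma ceq_op1 (op : R -> R) x x' : ceq x x' -> ceq (fun h => op (x h)) (fun h => op (x' h)).
Proof. intros [k1 H1]. exists k1. intros h Hh. rewrite H1; auto. Qed.
Lemma ceq_big g g' (f f' : nat -> real_map -> R) : ceq g g' -> (forall n, ceq (f n) (f' n)) ->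
  ceq (fun h => Rbig (g h) (fun n => f n h)) (fun h => Rbig (g' h) (fun n => f' n h)).
Proof.
  intros [k0 H0] Hf.
  set (ks := fun n => proj1_sig (constructive_indefinite_description _ (Hf n))).
  assert (Hks : forall n h, (forall m, sat h (ks n m)) -> f n h = f' n h).
  { intros n. unfold ks. destruct constructive_indefinite_description as [k Hk]. simpl. exact Hk. }
  exists (merge2_insts k0 (merge_insts ks)). intros h Hh. apply sat_merge2_insts in Hh. destruct Hh as [Ha Hb].
  pose proof (sat_merge_insts h ks Hb) as Hc.
  rewrite H0 by auto. f_equal. apply functional_extensionality. intros n. apply Hks. apply Hc.
Qed.

Definition ceq_class := { S : (real_map -> R) -> Prop | exists x, S = ceq x }.
Definition class_of (x : real_map -> R) : ceq_class := exist _ (ceq x) (ex_intro _ x eq_refl).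
Definition repr_of (A : ceq_class) : real_map -> R :=
  proj1_sig (constructive_indefinite_description _ (proj2_sig A)).
Lemma class_of_eq x y : ceq x y -> class_of x = class_of y.
Proof.
  intros H. unfold class_of. apply eq_sig_hprop. intros; apply proof_irrelevance. simpl.
  apply functional_extensionality. intros z. apply propositional_extensionality. split; intros H'.
  - eapply ceq_trans; [apply ceq_sym, H|exact H'].
  - eapply ceq_trans; [exact H|exact H'].
Qed.
Lemma ceq_of_class_of_eq x y : class_of x = class_of y -> ceq x y.
Proof.
  intros H. apply (f_equal (@proj1_sig _ _)) in H. simpl in H.
  assert (ceq y y) by apply ceq_refl. rewrite <- H in H0. exact H0.
Qed.
Lemma class_of_repr A : class_of (repr_of A) = A.
Proof.
  destruct A as [S HS]. unfold repr_of. simpl. destruct constructive_indefinite_description as [x Hx].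
  simpl. unfold class_of. apply eq_sig_hprop. intros; apply proof_irrelevance. simpl. symmetry. exact Hx.
Qed.
Lemma ceq_repr_class_of x : ceq (repr_of (class_of x)) x.
Proof. apply ceq_of_class_of_eq. rewrite class_of_repr. reflexivity. Qed.

Definition quot_alg : slg :=
  Slg ceq_class (class_of (@s0 (Rpow real_map)))
    (fun A B => class_of (@sadd (Rpow real_map) (repr_of A) (repr_of B)))
    (fun A => class_of (@sopp (Rpow real_map) (repr_of A)))
    (fun A B => class_of (@sjoin (Rpow real_map) (repr_of A) (repr_of B)))
    (fun A B => class_of (@smeet (Rpow real_map) (repr_of A) (repr_of B)))
    (fun A F => class_of (@sbig (Rpow real_map) (repr_of A) (fun n => repr_of (F n)))).

Definition quot_map : Rpow real_map -> quot_alg := class_of.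

Lemma quot_map_hom : is_hom quot_map.
Proof.
  unfold is_hom, quot_map; simpl. split; [reflexivity|]. split; [|split; [|split; [|split]]].
  - intros x y. apply class_of_eq. apply ceq_op2; apply ceq_sym, ceq_repr_class_of.
  - intros x. apply class_of_eq. apply ceq_op1; apply ceq_sym, ceq_repr_class_of.
  - intros x y. apply class_of_eq. apply ceq_op2; apply ceq_sym, ceq_repr_class_of.
  - intros x y. apply class_of_eq. apply ceq_op2; apply ceq_sym, ceq_repr_class_of.
  - intros g f. apply class_of_eq. apply ceq_big.
    + apply ceq_sym, ceq_repr_class_of.
    + intros n. apply ceq_sym, ceq_repr_class_of.
Qed.
Lemma quot_map_surj : forall y : quot_alg, exists x, quot_map x = y.
Proof. intros y. exists (repr_of y). apply class_of_repr. Qed.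

Definition eval_at (a : G) : Rpow real_map := fun h => h a.
Definition quot_embed (a : G) : quot_alg := quot_map (eval_at a).

Lemma ceq_inst (i : instance G) x y : (forall h : real_map, sat h i -> x h = y h) -> ceq x y.
Proof. intros H. exists (fun _ => i). intros h Hh. apply H, (Hh 0%nat). Qed.

Lemma quot_embed_hom : is_hom quot_embed.
Proof.
  destruct quot_map_hom as [H0 [H1 [H2 [H3 [H4 H5]]]]].
  unfold is_hom, quot_embed. split; [|split; [|split; [|split; [|split]]]].
  - rewrite <- H0. apply class_of_eq. apply (ceq_inst Izero). intros h Hh. exact Hh.
  - intros x y. rewrite <- H1. apply class_of_eq. apply (ceq_inst (Iadd x y)). intros h Hh. exact Hh.
  - intros x. rewrite <- H2. apply class_of_eq. apply (ceq_inst (Iopp x)). intros h Hh. exact Hh.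
  - intros x y. rewrite <- H3. apply class_of_eq. apply (ceq_inst (Ijoin x y)). intros h Hh. exact Hh.
  - intros x y. rewrite <- H4. apply class_of_eq. apply (ceq_inst (Imeet x y)). intros h Hh. exact Hh.
  - intros g f. rewrite <- H5. apply class_of_eq. apply (ceq_inst (Ibig g f)). intros h Hh. exact Hh.
Qed.

Lemma quot_embed_inj : in_variety G -> forall a b : G, quot_embed a = quot_embed b -> a = b.
Proof.
  intros HG a b H. apply ceq_of_class_of_eq in H. destruct H as [k Hk].
  apply NNPP. intros Hab. destruct (exists_sat_sep G HG a b k Hab) as [h [Hs Hh]].
  apply Hh. apply (Hk h Hs).
Qed.
End Quotient.

Lemma teval_hom {X : Type} (A B : slg) (f : A -> B) (v : X -> A) (t : term X) :
  is_hom f -> f (teval A v t) = teval B (fun x => f (v x)) t.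
Proof.
  intros [H0 [H1 [H2 [H3 [H4 H5]]]]].
  induction t as [x| |s IHs u IHu|s IHs|s IHs u IHu|s IHs u IHu|s IHs fs IHfs]; simpl.
  - reflexivity.
  - exact H0.
  - rewrite H1, IHs, IHu. reflexivity.
  - rewrite H2, IHs. reflexivity.
  - rewrite H3, IHs, IHu. reflexivity.
  - rewrite H4, IHs, IHu. reflexivity.
  - rewrite H5, IHs. f_equal. apply functional_extensionality. intros n. apply IHfs.
Qed.

Lemma teval_Rpow {X : Type} (I : Type) (w : X -> Rpow I) (t : term X) :
  teval (Rpow I) w t = fun i => teval R_alg (fun x => w x i) t.
Proof.
  induction t as [x| |s IHs u IHu|s IHs|s IHs u IHu|s IHs u IHu|s IHs fs IHfs]; simpl;
    try rewrite IHs; try rewrite IHu; try reflexivity.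
  apply functional_extensionality. intros i. f_equal.
  apply functional_extensionality. intros n. rewrite IHfs. reflexivity.
Qed.

Lemma holds_in_Rpow {X : Type} (I : Type) (s t : term X) :
  holds_in R_alg s t -> holds_in (Rpow I) s t.
Proof.
  intros H w. rewrite !teval_Rpow. apply functional_extensionality. intros i. apply H.
Qed.

Lemma holds_in_hom_image {X : Type} (A B : slg) (phi : A -> B) (s t : term X) :
  is_hom phi -> (forall y : B, exists x, phi x = y) -> holds_in A s t -> holds_in B s t.
Proof.
  intros Hphi Hsurj H v.
  destruct (choice (fun (x : X) (a : A) => phi a = v x)) as [w Hw]; [intros x; apply Hsurj|].
  replace v with (fun x => phi (w x)) by (apply functional_extensionality; apply Hw).
  rewrite <- !teval_hom by exact Hphi. f_equal. apply H.
Qed.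

Lemma holds_in_subalg {X : Type} (A B : slg) (psi : A -> B) (s t : term X) :
  is_hom psi -> (forall a b, psi a = psi b -> a = b) -> holds_in B s t -> holds_in A s t.
Proof.
  intros Hpsi Hinj H v. apply Hinj. rewrite !teval_hom by exact Hpsi. apply H.
Qed.

Lemma in_variety_embeds_in_quotient_of_Rpow (G : slg) : in_variety G ->
  exists (I : Type) (H : slg) (phi : Rpow I -> H) (psi : G -> H),
    is_hom phi /\ (forall y : H, exists x, phi x = y) /\
    is_hom psi /\ (forall a b : G, psi a = psi b -> a = b).
Proof.
  intros HG. exists (real_map G), (quot_alg G), (quot_map G), (quot_embed G).
  exact (conj (quot_map_hom G) (conj (quot_map_surj G) (conj (quot_embed_hom G) (quot_embed_inj G HG)))).
Qed.

Ltac solve_Rminmax := unfold Rmax, Rmin; repeat destruct Rle_dec; lra.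

Lemma Rbig_le g f u : (forall n, Rmin (f n) g <= u) -> Rbig g f <= u.
Proof. intros H. apply (proj2 (Rbig_lub g f)). intros x [n ->]. apply H. Qed.
Lemma Rbig_ge g f n : Rmin (f n) g <= Rbig g f.
Proof. apply (proj1 (Rbig_lub g f)). exists n. reflexivity. Qed.

Lemma R_A1 g f : Rbig g f = Rbig g (fun n => Rmin (f n) g).
Proof.
  apply Rle_antisym; apply Rbig_le; intros n.
  - eapply Rle_trans; [|apply (Rbig_ge g (fun n => Rmin (f n) g) n)]. simpl. solve_Rminmax.
  - eapply Rle_trans; [|apply (Rbig_ge g f n)]. solve_Rminmax.
Qed.
Lemma R_A2 g f : Rbig g f = Rmax (Rmin (f O) g) (Rbig g (fun n => f (S n))).
Proof.
  apply Rle_antisym.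
  - apply Rbig_le. intros [|n].
    + apply Rmax_l.
    + eapply Rle_trans; [|apply Rmax_r]. apply (Rbig_ge g (fun n => f (S n)) n).
  - apply Rmax_lub. apply Rbig_ge. apply Rbig_le. intros n. apply (Rbig_ge g f (S n)).
Qed.
Lemma R_A3 g h f : Rmin (Rbig g (fun n => Rmin (f n) h)) h = Rbig g (fun n => Rmin (f n) h).
Proof.
  apply Rmin_left. apply Rbig_le. intros n. solve_Rminmax.
Qed.

Definition valuation3 {A : slg} (x y : A) (f : nat -> A) (n : nat) : A :=
  match n with O => x | 1 => y | S (S k) => f k end.

Ltac transfer_R_equation Heq s t v :=
  exact (Heq nat s t
           (fun w => ltac:(simpl; first [lra | solve_Rminmax | apply R_A1 | apply R_A2 | apply R_A3])) v).

Lemma in_variety_of_R_equations (A : slg) :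
  (forall (X : Type) (s t : term X), holds_in R_alg s t -> holds_in A s t) -> in_variety A.
Proof.
  intros Heq. set (x0 := @tvar nat 0%nat). set (x1 := @tvar nat 1%nat). set (x2 := @tvar nat 2%nat).
  set (xs := fun n => @tvar nat (S (S n))).
  constructor.
  - intros x y z. transfer_R_equation Heq (tadd x0 (tadd x1 x2)) (tadd (tadd x0 x1) x2)
      (valuation3 x y (fun _ => z)).
  - intros x y. transfer_R_equation Heq (tadd x0 x1) (tadd x1 x0) (valuation3 x y (fun _ => x)).
  - intros x. transfer_R_equation Heq (tadd x0 t0) x0 (valuation3 x x (fun _ => x)).
  - intros x. transfer_R_equation Heq (tadd x0 (topp x0)) (@t0 nat) (valuation3 x x (fun _ => x)).
  - intros x y z. transfer_R_equation Heq (tjoin x0 (tjoin x1 x2)) (tjoin (tjoin x0 x1) x2)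
      (valuation3 x y (fun _ => z)).
  - intros x y. transfer_R_equation Heq (tjoin x0 x1) (tjoin x1 x0) (valuation3 x y (fun _ => x)).
  - intros x y z. transfer_R_equation Heq (tmeet x0 (tmeet x1 x2)) (tmeet (tmeet x0 x1) x2)
      (valuation3 x y (fun _ => z)).
  - intros x y. transfer_R_equation Heq (tmeet x0 x1) (tmeet x1 x0) (valuation3 x y (fun _ => x)).
  - intros x y. transfer_R_equation Heq (tjoin x0 (tmeet x0 x1)) x0 (valuation3 x y (fun _ => x)).
  - intros x y. transfer_R_equation Heq (tmeet x0 (tjoin x0 x1)) x0 (valuation3 x y (fun _ => x)).
  - intros x y z. transfer_R_equation Heq (tadd x0 (tjoin x1 x2)) (tjoin (tadd x0 x1) (tadd x0 x2))
      (valuation3 x y (fun _ => z)).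
  - intros x y z. transfer_R_equation Heq (tadd x0 (tmeet x1 x2)) (tmeet (tadd x0 x1) (tadd x0 x2))
      (valuation3 x y (fun _ => z)).
  - intros g f. transfer_R_equation Heq (tbig x0 xs) (tbig x0 (fun n => tmeet (xs n) x0))
      (valuation3 g g f).
  - intros g f. transfer_R_equation Heq (tbig x0 xs) (tjoin (tmeet x2 x0) (tbig x0 (fun n => xs (S n))))
      (valuation3 g g f).
  - intros g h f. transfer_R_equation Heq (tmeet (tbig x0 (fun n => tmeet (xs n) x1)) x1)
      (tbig x0 (fun n => tmeet (xs n) x1)) (valuation3 g h f).
Qed.

Theorem mainTheorem12 :
  (forall G : slg, in_variety G ->
     exists (I : Type) (H : slg) (phi : Rpow I -> H) (psi : G -> H),
       is_hom phi /\ (forall y : H, exists x, phi x = y) /\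
       is_hom psi /\ (forall a b : G, psi a = psi b -> a = b)) /\
  (forall A : slg, in_variety A <->
     (forall (X : Type) (s t : term X), holds_in R_alg s t -> holds_in A s t)).
Proof.
  split; [exact in_variety_embeds_in_quotient_of_Rpow|].
  intros A. split; [|apply in_variety_of_R_equations].
  intros HA X s t Hst.
  destruct (in_variety_embeds_in_quotient_of_Rpow A HA) as (I & H & phi & psi & Hphi & Hsurj & Hpsi & Hinj).
  apply (holds_in_subalg A H psi s t Hpsi Hinj).
  apply (holds_in_hom_image (Rpow I) H phi s t Hphi Hsurj).
  apply holds_in_Rpow, Hst.
Qed.
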